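(* If nodes have no a priori knowledge, there is no distributed algorithm that decides if a configuration is feasible. That is, there is no DRIP $D$ together with a function $g$ mapping final histories to $\{\text{yes},\text{no}\}$ such that, for every configuration $G$, when all nodes of $G$ execute $D$: if $G$ is feasible then $g$ outputs ''yes'' at every node, and if $G$ is not feasible then $g$ outputs ''no'' at at least one node.
   Context: Model. A configuration is a finite simple undirected connected graph $G$ in which each node $v$ is tagged with a non-negative integer $t_v$ (wakeup tag). Nodes are anonymous and communicate in synchronous global rounds. A node $v$ wakes up in the first global round $r\le t_v$ in which it receives a message, if any, and otherwise in global round $t_v$; its local clock is $0$ in its wakeup round, it acts from local round $1$, and nodes do not know the global clock. In each round a node transmits a message to all neighbours, listens, or terminates. A listening node receives $M$ if exactly one neighbour transmits ($M$), hears collision noise (distinct from silence and messages) if at least two neighbours transmit, and silence otherwise; a transmitting node hears nothing. The history $\mathcal H_v[i]$ of $v$ in local round $i$ is $(\emptyset)$ (transmitted, silence, or spontaneous wakeup at $i=0$), $(M)$ (received $M$, or woken by $M$ at $i=0$), or $( * )$ (collision). A DRIP is a function $D$ from finite history vectors to $\{\mathit{listen},\mathit{transmit}(M),\mathit{terminate}\}$; each node $v$ in local round $i\ge1$ performs $D(\mathcal H_v[0\ldots i-1])$, and every node eventually terminates permanently (first at local round $done_v$); outputs are functions of $\mathcal H_v[0\ldots done_v]$. A decision function $f$ maps final histories to $\{0,1\}$; $(D,f)$ is a dedicated leader election algorithm for $G$ if, when all nodes of $G$ execute $D$, exactly one node gets output $1$; $G$ is feasible if such a pair exists. ''No a priori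 knowledge'' means the same DRIP and output function are used for all configurations. *)

From mathcomp Require Import all_boot.
Unset Printing Implicit Defensive.

(* History entries: (empty) silence / transmitted / spontaneous wakeup,
   (M) a received message, ( * ) collision noise. *)
Inductive entry (M : Type) := ESil | EMsg of M | ECol.
Arguments ESil {M}. Arguments ECol {M}. Arguments EMsg {M}.

Inductive action (M : Type) := Listen | Transmit of M | Terminate.
Arguments Listen {M}. Arguments Terminate {M}. Arguments Transmit {M}.

Definition drip (M : Type) := seq (entry M) -> action M.

Record config := Config {
  cn : nat;
  cedge : rel 'I_cn;
  ctag : 'I_cn -> nat;
  cpos : 0 < cn;
  csym : symmetric cedge;
  cirr : irreflexive cedge;
  cconn : forall u v, connect cedge u v }.

Inductive status (M : Type) := Asleep | Active of seq (entry M) | Done of seq (entry M).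
Arguments Asleep {M}. Arguments Active {M}. Arguments Done {M}.

Section Run.
Variables (M : Type) (D : drip M).

Definition transmits (s : status M) : option M :=
  match s with
  | Active h => match D h with Transmit m => Some m | _ => None end
  | _ => None
  end.

Definition reception {n} (e : rel 'I_n) (tr : 'I_n -> option M) (v : 'I_n) : entry M :=
  match pmap id [seq (if e v u then tr u else None) | u <- enum 'I_n] with
  | [::] => ESil
  | [:: m] => EMsg m
  | _ => ECol
  end.

Definition node_step (tagv r : nat) (rec : entry M) (s : status M) : status M :=
  match s with
  | Asleep =>
      match rec with
      | EMsg m => Active [:: EMsg m]
      | _ => if r == tagv then Active [:: ESil]
             else Asleep
      end
  | Active h =>
      match D h with
      | Terminate => Done (rcons h ESil)
      | Transmit _ => Active (rcons h ESil)
      | Listen => Active (rcons h rec)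
      end
  | Done h => Done h
  end.

(* run G r v = status of v before global round r (i.e. after rounds 0..r-1) *)
Definition run (G : config) : nat -> 'I_(cn G) -> status M :=
  fix go (r : nat) : 'I_(cn G) -> status M :=
  match r with
  | 0 => fun _ => Asleep
  | r'.+1 =>
      let s := go r' in
      fun v => node_step (ctag G v) r'
                 (reception (cedge G) (fun u => transmits (s u)) v) (s v)
  end.

Definition final (G : config) (v : 'I_(cn G)) (h : seq (entry M)) : Prop :=
  exists r, run G r v = Done h.

Definition terminates (G : config) : Prop :=
  forall v : 'I_(cn G), exists h, final G v h.

Definition elects (f : seq (entry M) -> bool) (G : config) : Prop :=
  terminates G /\
  exists v : 'I_(cn G), forall w h, final G w h -> (f h = true <-> w = v).

End Run.
Arguments transmits {M}. Arguments reception {M n}. Arguments node_step {M}.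
Arguments run {M}. Arguments final {M}. Arguments terminates {M}. Arguments elects {M}.

Definition feasible (G : config) : Prop :=
  exists (D : drip nat) (f : seq (entry nat) -> bool), elects D f G.

(* (D,g) decides feasibility for all configurations (no a priori knowledge);
   g h = true means "yes". *)
Definition decides_feasibility {M : Type} (D : drip M) (g : seq (entry M) -> bool) : Prop :=
  forall G : config,
    terminates D G /\
    (feasible G -> forall v h, final D G v h -> g h = true) /\
    (~ feasible G -> exists v h, final D G v h /\ g h = false).

From mathcomp Require Import all_boot.

(* In a complete graph whose nodes all share the same wakeup tag,
   the nodes act in lockstep, so at any round either all of them transmit
   (and nobody listens) or none does (and every listener hears silence).
   Each node therefore runs exactly as the lone node of the one-node
   configuration with that tag.  The one-node configuration is feasible,
   while the complete graph on two nodes is not, since both nodes end with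
   the same history.  A decider would have to answer "yes" on the final
   history of the lone node and "no" on the same history in the pair. *)

Lemma reception_ESil (M : Type) n (e : rel 'I_n) (tr : 'I_n -> option M) v :
  (forall u, e v u -> tr u = None) -> reception e tr v = ESil.
Proof.
move=> silent; rewrite /reception.
suff -> : pmap id [seq (if e v u then tr u else None) | u <- enum 'I_n] = [::] by [].
by elim: (enum 'I_n) => //= u s ->; case: ifP => // /silent ->.
Qed.

Section CompleteGraph.
Variable n : nat.

Definition complete_rel : rel 'I_n.+1 := fun u v => u != v.

Lemma complete_rel_sym : symmetric complete_rel.
Proof. by move=> u v; rewrite /complete_rel eq_sym. Qed.

Lemma complete_rel_irr : irreflexive complete_rel.
Proof. by move=> u; rewrite /complete_rel eqxx. Qed.

Lemma complete_rel_connect u v : connect complete_rel u v.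
Proof. by case: (eqVneq u v) => [->|neq_uv]; [exact: connect0 | exact: connect1]. Qed.

Definition complete (t : nat) : config :=
  @Config n.+1 complete_rel (fun _ => t) (ltn0Sn n)
    complete_rel_sym complete_rel_irr complete_rel_connect.

End CompleteGraph.

Lemma reception_single (M : Type) (tr : 'I_1 -> option M) v :
  reception (complete_rel 0) tr v = ESil.
Proof. by apply: reception_ESil => u; rewrite (ord1 u) (ord1 v) /complete_rel eqxx. Qed.

Section Lockstep.
Context {M : Type} (D : drip M).

Lemma run_complete n t r (v : 'I_n.+1) :
  run D (complete n t) r v = run D (complete 0 t) r ord0.
Proof.
elim: r v => [//|r IH] v /=; rewrite IH.
case tr_s: (transmits D (run D (complete 0 t) r ord0)) => [m|].
- by move: tr_s; case: (run D (complete 0 t) r ord0) => //= h; case: (D h).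
- by rewrite reception_single reception_ESil // => u _; rewrite IH.
Qed.

Lemma final_complete n t (v : 'I_n.+1) h :
  final D (complete n t) v h <-> final D (complete 0 t) ord0 h.
Proof. by split=> -[r]; [rewrite run_complete | rewrite -(run_complete n t r v)]; exists r. Qed.

End Lockstep.

Lemma complete_infeasible n t : ~ feasible (complete n.+1 t).
Proof.
case=> D [f [term [v leader]]].
have [h final_v] := term v.
have final_w := (final_complete D n.+1 t (lift v ord0) h).2
                  ((final_complete D n.+1 t v h).1 final_v).
have w_is_v : lift v ord0 = v by apply/(leader _ _ final_w)/(leader _ _ final_v).
by move/eqP: (neq_lift v ord0); apply; rewrite w_is_v.
Qed.

Lemma run_single_asleep (M : Type) (D : drip M) t r (v : 'I_1) :
  r <= t -> run D (complete 0 t) r v = Asleep.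
Proof.
elim: r v => [//|r IH] v lt_rt; move/(_ _ (ltnW lt_rt)): IH => IH.
by rewrite /= IH reception_single /node_step ltn_eqF.
Qed.

Lemma single_feasible t : feasible (complete 0 t).
Proof.
exists (fun _ => Terminate), (fun _ => true); split.
- move=> v; exists [:: ESil; ESil], t.+2; rewrite (ord1 v) /=.
  by rewrite !reception_single run_single_asleep // /node_step eqxx.
- by exists ord0 => w h _; rewrite (ord1 w).
Qed.

Theorem proposition5 :
  forall (M : Type) (D : drip M) (g : seq (entry M) -> bool),
    ~ decides_feasibility D g.
Proof.
move=> M D g decides.
have [_ [_ /(_ (@complete_infeasible 0 0)) [v [h [final_v no]]]]] := decides (complete 1 0).
have [_ [/(_ (single_feasible 0)) yes _]] := decides (complete 0 0).
have final_single := (final_complete D 1 0 v h).1 final_v.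
by rewrite (yes ord0 h final_single) in no.
Qed.
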